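(* Assume the setting and standing assumptions described in the context. For any given $\Delta\in\mathcal{D}$, $\lim_{\kappa\to+\infty}\rho(\Delta,\kappa)=-\infty$.
   Context: Let $n,m\ge 1$, $B\in\mathbb{Z}^{n\times m}$, $C\in\mathbb{Z}^{m\times n}$. Given bounds $0\le \Delta_j^-\le \Delta_j^+<\infty$ ($j=1,\dots,m$), let $\mathcal{D}$ be the set of diagonal matrices $\Delta=\mathrm{diag}(\Delta_1,\dots,\Delta_m)$ with $\Delta_j^-\le\Delta_j\le\Delta_j^+$. Let $J_2,J_4\in\mathbb{R}^{n\times n}$ be symmetric, with $J_2$ indefinite, $J_4$ negative semidefinite, and such that there exists $\bar\kappa$ with $\bar\kappa^2J_2+\bar\kappa^4J_4$ negative definite. Standing assumption: for every $\Delta\in\mathcal{D}$, $B\Delta C$ is singular and has $n-1$ eigenvalues (with multiplicity) with negative real part, and there is a nonzero $v\ge0$ with $v^\top B=0$. For real $\kappa\ge0$, $\rho(\Delta,\kappa)$ denotes the spectral abscissa (maximum real part of the eigenvalues) of $B\Delta C+\kappa^2J_2+\kappa^4J_4$. *)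

From HB Require Import structures.
From mathcomp Require Import all_boot all_order all_algebra.
From mathcomp Require Import all_classical all_reals all_analysis.
From mathcomp Require Import complex.
Set Implicit Arguments. Unset Strict Implicit. Unset Printing Implicit Defensive.
Import Order.TTheory GRing.Theory Num.Theory.
Local Open Scope ring_scope.
Local Open Scope classical_set_scope.

Notation Cx R := (complex.complex R).

Definition cmx (R : realType) (n : nat) (A : 'M[R]_n) : 'M[Cx R]_n :=
  map_mx (fun x : R => complex.Complex x 0) A.

(* spectral abscissa: maximum (= supremum of the finite, nonempty set) of the
   real parts of the (complex) eigenvalues, i.e. roots of the char. polynomial *)
Definition spectral_abscissa (R : realType) (n : nat) (A : 'M[R]_n) : R :=
  sup [set complex.Re z | z in [set z : Cx R | root (char_poly (cmx A)) z]].

Definition eigen_multiset (R : realType) (n : nat) (A : 'M[R]_n) (s : seq (Cx R)) :=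
  size s = n /\ char_poly (cmx A) = \prod_(z <- s) ('X - z%:P).

Definition quadform (R : realType) (n : nat) (J : 'M[R]_n) (x : 'rV[R]_n) : R :=
  (x *m J *m x^T) 0 0.

Definition symmetric_mx (R : realType) (n : nat) (J : 'M[R]_n) := J^T = J.
Definition indefinite (R : realType) (n : nat) (J : 'M[R]_n) :=
  (exists x, 0 < quadform J x) /\ (exists y, quadform J y < 0).
Definition neg_semidef (R : realType) (n : nat) (J : 'M[R]_n) :=
  forall x, quadform J x <= 0.
Definition neg_def (R : realType) (n : nat) (J : 'M[R]_n) :=
  forall x, x != 0 -> quadform J x < 0.

Definition rmx (R : realType) (p q : nat) (A : 'M[int]_(p, q)) : 'M[R]_(p, q) :=
  map_mx (fun z : int => z%:~R) A.

(* Delta in the box D, Delta = diag_mx d *)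
Definition in_box (R : realType) (m : nat) (dm dp d : 'rV[R]_m) :=
  forall j, dm 0 j <= d 0 j <= dp 0 j.

Definition Mk (R : realType) (n m : nat) (B : 'M[int]_(n, m)) (C : 'M[int]_(m, n))
  (J2 J4 : 'M[R]_n) (d : 'rV[R]_m) (k : R) : 'M[R]_n :=
  rmx R B *m diag_mx d *m rmx R C + (k ^+ 2) *: J2 + (k ^+ 4) *: J4.

Definition rho (R : realType) (n m : nat) (B : 'M[int]_(n, m)) (C : 'M[int]_(m, n))
  (J2 J4 : 'M[R]_n) (d : 'rV[R]_m) (k : R) : R :=
  spectral_abscissa (Mk B C J2 J4 d k).

(* Write s = kb^2 and let -e |x|^2 bound the form x N x^T of the negative
   definite N = s J2 + s^2 J4 (compactness of the unit sphere).  For t >= s,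
   t J2 + t^2 J4 is bounded by -(e/s) t |x|^2: scale the bound on N by t/s and
   use t^2 J4 <= t s J4, as J4 <= 0.  The fixed part B Delta C contributes at
   most K |x|^2 with K the sum of its absolute entries, so the whole matrix M
   at t = k^2 has form at most (K - (e/s) k^2) |x|^2.  If z is a complex
   eigenvalue with left eigenvector a + i b, then a M a^T + b M b^T equals
   Re z (|a|^2 + |b|^2), hence rho <= K - (e/s) k^2, which tends to -oo. *)

From mathcomp Require Import all_boot all_order all_algebra.
From mathcomp Require Import all_classical all_reals all_analysis.
From mathcomp Require Import complex.
From mathcomp Require Import ring lra.
Import Order.TTheory GRing.Theory Num.Theory.
Import numFieldTopology.Exports numFieldNormedType.Exports.

Local Open Scope ring_scope.
Local Open Scope classical_set_scope.

Lemma ler_mul_norm_sqr (R : realDomainType) (a u w S : R) :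
  u ^+ 2 <= S -> w ^+ 2 <= S -> u * a * w <= `|a| * S.
Proof.
move=> hu hw; case: (ger0P a) => ha.
  have := mulr_ge0 ha (sqr_ge0 (u - w)); nra.
have na : 0 <= - a by rewrite oppr_ge0 ltW.
have := mulr_ge0 na (sqr_ge0 (u + w)); nra.
Qed.

Section QuadraticForms.
Context {R : realType} {n : nat}.
Implicit Types (J K : 'M[R]_n) (x : 'rV[R]_n).

Definition sqnorm x : R := quadform 1%:M x.

Lemma quadformE J x : quadform J x = \sum_j (\sum_i x 0 i * J i j) * x 0 j.
Proof.
rewrite /quadform !mxE; apply: eq_bigr => j _; rewrite !mxE.
by congr (_ * _); apply: eq_bigr => i _; rewrite mxE.
Qed.

Lemma quadformDl J K x : quadform (J + K) x = quadform J x + quadform K x.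
Proof. by rewrite /quadform mulmxDr mulmxDl mxE. Qed.

Lemma quadformZl a J x : quadform (a *: J) x = a * quadform J x.
Proof. by rewrite /quadform -scalemxAr -scalemxAl mxE. Qed.

Lemma quadformZr a J x : quadform J (a *: x) = a ^+ 2 * quadform J x.
Proof.
by rewrite /quadform linearZ /= -scalemxAr -!scalemxAl scalerA mxE expr2.
Qed.

Lemma quadform0r J : quadform J 0 = 0.
Proof. by rewrite /quadform !mul0mx mxE. Qed.

Lemma quadform_continuous J : continuous (quadform J).
Proof.
rewrite (funext (quadformE J)).
apply: continuous_big => [|j _ x]; first exact: add_continuous.
apply: continuousM; last exact: coord_continuous.
apply: continuous_big => [|i _ {}x]; first exact: add_continuous.
by apply: continuousM; [exact: coord_continuous | exact: cst_continuous].
Qed.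

Lemma sqnormE x : sqnorm x = \sum_i x 0 i ^+ 2.
Proof.
rewrite /sqnorm quadformE; apply: eq_bigr => j _.
rewrite (bigD1 j) //= big1 => [|i /negPf ij]; last by rewrite !mxE ij mulr0.
by rewrite !mxE eqxx mulr1 addr0 expr2.
Qed.

Lemma ler_sqnorm x i : x 0 i ^+ 2 <= sqnorm x.
Proof.
by rewrite sqnormE (bigD1 i) //= lerDl sumr_ge0 // => j _; rewrite sqr_ge0.
Qed.

Lemma sqnorm_ge0 x : 0 <= sqnorm x.
Proof. by rewrite sqnormE sumr_ge0 // => i _; rewrite sqr_ge0. Qed.

Lemma sqnorm_eq0 x : (sqnorm x == 0) = (x == 0).
Proof.
apply/idP/eqP => [x0|->]; last by rewrite /sqnorm quadform0r.
apply/matrixP => i j; rewrite (ord1 i) mxE.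
by apply/eqP; rewrite -sqrf_eq0 eq_le sqr_ge0 -(eqP x0) ler_sqnorm.
Qed.

Lemma sqnorm_gt0 x : (0 < sqnorm x) = (x != 0).
Proof. by rewrite lt_def sqnorm_eq0 sqnorm_ge0 andbT. Qed.

Lemma quadform_le_sum_norm J x :
  quadform J x <= (\sum_j \sum_i `|J i j|) * sqnorm x.
Proof.
rewrite quadformE mulr_suml; apply: ler_sum => j _.
rewrite !mulr_suml; apply: ler_sum => i _.
exact: ler_mul_norm_sqr (ler_sqnorm x i) (ler_sqnorm x j).
Qed.

Lemma quadform_normalize J x :
  quadform J x = sqnorm x * quadform J ((Num.sqrt (sqnorm x))^-1 *: x).
Proof.
have [->|x0] := eqVneq x 0; first by rewrite !scaler0 !quadform0r mulr0.
rewrite quadformZr exprVn sqr_sqrtr ?sqnorm_ge0 // mulrA mulfV ?mul1r //.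
by rewrite sqnorm_eq0.
Qed.

Lemma sqnorm_normalize x : x != 0 -> sqnorm ((Num.sqrt (sqnorm x))^-1 *: x) = 1.
Proof.
move=> x0; rewrite /sqnorm quadformZr exprVn sqr_sqrtr ?sqnorm_ge0 //.
by rewrite mulVf // sqnorm_eq0.
Qed.

End QuadraticForms.

Section Eigenvalues.
Context {R : realType} {n : nat}.

Lemma Re_eigenvalue_le (P : 'M[R]_n) c z :
  (forall x, quadform P x <= c * sqnorm x) ->
  root (char_poly (cmx P)) z -> complex.Re z <= c.
Proof.
move=> hP; rewrite -eigenvalue_root_char => /eigenvalueP [v hv v0].
case: z hv => zr zi hv /=.
pose a := map_mx (@complex.Re R) v; pose b := map_mx (@complex.Im R) v.
have Re_sum := raddf_sum (@complex.Re R : Rcomplex R -> R).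
have Im_sum := raddf_sum (@complex.Im R : Rcomplex R -> R).
have aP : a *m P = zr *: a - zi *: b.
  apply/matrixP => i j; move/matrixP/(_ i j)/(congr1 (@complex.Re R)): hv.
  rewrite !mxE Re_sum; case: (v i j) => ? ? /= <-.
  by apply: eq_bigr => k _; rewrite !mxE; case: (v i k) => ? ? /=; ring.
have bP : b *m P = zr *: b + zi *: a.
  apply/matrixP => i j; move/matrixP/(_ i j)/(congr1 (@complex.Im R)): hv.
  rewrite !mxE Im_sum; case: (v i j) => ? ? /= <-.
  by apply: eq_bigr => k _; rewrite !mxE; case: (v i k) => ? ? /=; ring.
have ab_sym : b *m a^T = a *m b^T.
  rewrite -[RHS]trmxK trmx_mul trmxK.
  by apply/matrixP => i j; rewrite !ord1 [RHS]mxE.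
have key : quadform P a + quadform P b = zr * (sqnorm a + sqnorm b).
  rewrite /sqnorm /quadform !mulmx1 aP bP !mulmxDl mulNmx -!scalemxAl ab_sym.
  by move: (a *m a^T) (b *m b^T) (a *m b^T) => aa bb ab; rewrite !mxE; ring.
have ab_gt0 : 0 < sqnorm a + sqnorm b.
  rewrite lt_def paddr_eq0 ?sqnorm_ge0 // !sqnorm_eq0 addr_ge0 ?sqnorm_ge0 //.
  rewrite andbT; apply: contra v0 => /andP[/eqP a0 /eqP b0].
  apply/eqP/matrixP => i j; move/matrixP/(_ i j): a0; move/matrixP/(_ i j): b0.
  by rewrite !mxE; case: (v i j) => ? ? /= -> ->.
rewrite -(ler_pM2r ab_gt0) -key mulrDr.
exact: lerD (hP a) (hP b).
Qed.

End Eigenvalues.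

Lemma pencil_scaling_le (R : realFieldType) (s t e q2 q4 S : R) :
  0 < s -> s <= t -> q4 <= 0 -> s * q2 + s ^+ 2 * q4 <= - e * S ->
  t * q2 + t ^+ 2 * q4 <= - (e / s * t) * S.
Proof.
move=> s0 st q4le hs.
have t0 : 0 <= t / s by rewrite divr_ge0 // (le_trans (ltW s0)).
have := ler_wpM2l t0 hs.
have -> : t / s * (s * q2 + s ^+ 2 * q4) = t * q2 + t * s * q4.
  by field; rewrite gt_eqF.
have -> : t / s * (- e * S) = - (e / s * t) * S by ring.
have : t ^+ 2 * q4 <= t * s * q4.
  by rewrite expr2 ler_wnM2r // ler_wpM2l // (le_trans (ltW s0)).
lra.
Qed.

Section PositiveDimension.
Context {R : realType} {n : nat}.
Hypothesis n_gt0 : (0 < n)%N.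
Implicit Types (A J : 'M[R]_n).

Lemma exists_rV_neq0 : exists x : 'rV[R]_n, x != 0.
Proof.
exists (const_mx 1); apply/eqP => /matrixP/(_ 0 (Ordinal n_gt0)).
by rewrite !mxE => /eqP; rewrite oner_eq0.
Qed.

Lemma neg_def0 : ~ neg_def (0 : 'M[R]_n).
Proof.
have [x x0] := exists_rV_neq0.
by move=> /(_ x x0); rewrite /quadform mulmx0 mul0mx mxE ltxx.
Qed.

Lemma neg_def_uniform J :
  neg_def J -> exists2 e, 0 < e & forall x, quadform J x <= - e * sqnorm x.
Proof.
move=> J_neg; pose S := [set x : 'rV[R]_n | sqnorm x = 1].
have S_compact : compact S.
  apply: (@subclosed_compact _ S
    [set x : 'rV[R]_n | forall i, `[-1, 1]%classic (x ord0 i)]).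
  - exact: closed_comp (fun x _ => quadform_continuous (1%:M : 'M[R]_n) x)
      (@closed_eq R 1).
  - apply: (@rV_compact _ _ (fun=> `[(-1 : R), 1]%classic)) => _.
    exact: segment_compact.
  - move=> x /= Sx i; have := ler_sqnorm x i; rewrite Sx => xi.
    by rewrite in_itv /=; apply/andP; split; nra.
have S_neq0 : S !=set0.
  have [x x0] := exists_rV_neq0.
  by exists ((Num.sqrt (sqnorm x))^-1 *: x); exact: sqnorm_normalize.
have [u Su u_max] := EVT_max_rV S_neq0 S_compact
  (continuous_subspaceT (quadform_continuous J)).
have u0 : u != 0 by rewrite -sqnorm_gt0 (set_mem Su) ltr01.
exists (- quadform J u); first by rewrite oppr_gt0 J_neg.
move=> x; have [->|x0] := eqVneq x 0.
  by rewrite /sqnorm !quadform0r mulr0.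
rewrite opprK mulrC quadform_normalize ler_pM2l ?sqnorm_gt0 //.
by apply: u_max; rewrite inE; exact: sqnorm_normalize.
Qed.

Lemma spectral_abscissa_le (P : 'M[R]_n) c :
  (forall x, quadform P x <= c * sqnorm x) -> spectral_abscissa P <= c.
Proof.
move=> P_le; apply: ge_sup => [|_ [z Pz <-]]; last exact: Re_eigenvalue_le Pz.
have /closed_rootP [z Pz] : size (char_poly (cmx P)) != 1%N.
  by rewrite size_char_poly eqSS -lt0n.
by exists (complex.Re z), z.
Qed.

Lemma spectral_abscissa_pencil_le A J2 J4 s :
  0 < s -> neg_semidef J4 -> neg_def (s *: J2 + s ^+ 2 *: J4) ->
  exists2 c, 0 < c & forall t, s <= t ->
    spectral_abscissa (A + t *: J2 + t ^+ 2 *: J4)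
      <= \sum_j \sum_i `|A i j| - c * t.
Proof.
move=> s0 J4_le /neg_def_uniform [e e0 e_le].
exists (e / s); first exact: divr_gt0.
move=> t st; apply: spectral_abscissa_le => x.
rewrite -addrA quadformDl mulrBl.
apply: lerD; first exact: quadform_le_sum_norm.
have := e_le x; rewrite -mulNr !quadformDl !quadformZl.
exact: pencil_scaling_le.
Qed.

Lemma spectral_abscissa_pencil_cvgNy A J2 J4 :
  neg_semidef J4 -> (exists k0, neg_def (k0 ^+ 2 *: J2 + k0 ^+ 4 *: J4)) ->
  spectral_abscissa (A + k ^+ 2 *: J2 + k ^+ 4 *: J4) @[k --> +oo] --> -oo.
Proof.
move=> J4_le [k0].
rewrite (_ : k0 ^+ 4 = (k0 ^+ 2) ^+ 2) => [k0_def|]; last by rewrite -exprM.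
have s0 : 0 < k0 ^+ 2.
  rewrite lt_def sqr_ge0 andbT sqrf_eq0; apply: contraPN k0_def => /eqP ->.
  by rewrite expr0n /= expr0n !scale0r addr0; exact: neg_def0.
have [c c0 bound] := spectral_abscissa_pencil_le A J2 J4 _ s0 J4_le k0_def.
pose K := \sum_j \sum_i `|A i j|.
have sqr_large M : \forall k \near +oo, M <= k ^+ 2 := cvgry_ge cvgr_expr2 M.
apply: (@ler_cvgNy _ _ _ _ (fun k => K - c * k ^+ 2)).
  near=> k; rewrite (_ : k ^+ 4 = (k ^+ 2) ^+ 2); last by rewrite -exprM.
  by apply: bound; near: k; exact: sqr_large.
apply/cvgrNyPle => M; near=> k.
rewrite lerBlDr -lerBlDl -ler_pdivrMl //.
by near: k; exact: sqr_large.
Unshelve. all: end_near.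
Qed.

End PositiveDimension.

Theorem lemma1 (R : realType) (n m : nat) (hn : (1 <= n)%N) (hm : (1 <= m)%N)
  (B : 'M[int]_(n, m)) (C : 'M[int]_(m, n)) (dm dp : 'rV[R]_m)
  (hdm : forall j, 0 <= dm 0 j) (hdmp : forall j, dm 0 j <= dp 0 j)
  (J2 J4 : 'M[R]_n)
  (hJ2s : symmetric_mx J2) (hJ4s : symmetric_mx J4)
  (hJ2 : indefinite J2) (hJ4 : neg_semidef J4)
  (hkbar : exists kb : R, neg_def (kb ^+ 2 *: J2 + kb ^+ 4 *: J4))
  (hsing : forall d : 'rV[R]_m, in_box dm dp d ->
      \det (rmx R B *m diag_mx d *m rmx R C) = 0)
  (hspec : forall d : 'rV[R]_m, in_box dm dp d ->
      exists s, eigen_multiset (rmx R B *m diag_mx d *m rmx R C) s /\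
                count (fun z => complex.Re z < 0) s = n.-1)
  (hv : exists v : 'rV[R]_n, v != 0 /\ (forall i, 0 <= v 0 i) /\ v *m rmx R B = 0)
  (d : 'rV[R]_m) (hd : in_box dm dp d) :
  rho B C J2 J4 d k @[k --> +oo] --> -oo.
Proof. exact: (spectral_abscissa_pencil_cvgNy hn _ _ _ hJ4 hkbar). Qed.
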